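(* For every $\varepsilon>0$ there exists $d_0$ such that for every integer $d\ge d_0$ and every triangle-free graph $G$ on $n$ vertices with maximum degree $d$, \[ |\mathcal I(G)| \;\ge\; \exp\!\left[\left(\tfrac12-\varepsilon\right)\frac{\log^2 d}{d}\,n\right]. \]
   Context: $\mathcal I(G)$ denotes the set of all independent sets of $G$ (including the empty set). Logarithms are natural. *)

From mathcomp Require Import all_boot.
From Stdlib Require Import Reals.

Set Implicit Arguments.
Unset Strict Implicit.
Unset Printing Implicit Defensive.

Definition simple_graph (T : finType) (e : rel T) : Prop :=
  (forall x y, e x y = e y x) /\ (forall x, ~~ e x x).

Definition triangle_free (T : finType) (e : rel T) : Prop :=
  forall x y z, ~ [&& e x y, e y z & e x z].

Definition deg (T : finType) (e : rel T) (v : T) : nat := #|[set u | e v u]|.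

Definition max_degree_eq (T : finType) (e : rel T) (d : nat) : Prop :=
  (forall v, deg e v <= d) /\ (exists v, deg e v = d).

Definition independent (T : finType) (e : rel T) (S : {set T}) : bool :=
  [forall x in S, forall y in S, ~~ e x y].

Definition num_indep (T : finType) (e : rel T) : nat :=
  #|[set S : {set T} | independent e S]|.

From mathcomp Require Import all_boot all_order all_algebra.
From mathcomp Require Import Rstruct.
From Stdlib Require Import Reals.
From mathcomp Require Import ring lra.
Import Order.TTheory GRing.Theory Num.Theory.
Set Implicit Arguments. Unset Strict Implicit. Unset Printing Implicit Defensive.
Local Open Scope ring_scope.

(* Let Z(l) be the sum of l^|I| over the independent sets I of G, so that |I(G)| = Z(1), and let
   a(l) = l Z'(l) / (n Z(l)) be the occupancy fraction of the hard-core model at fugacity l.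
   In a triangle-free graph the uncovered neighbours of a vertex v carry a product measure, so v
   is uncovered with probability at least E[(1 + l)^-Y], where Y is the number of uncovered
   neighbours of v.  Bounding (1 + l)^-Y below by a tangent line and E[Y] above by degrees gives,
   for l <= delta <= 1 and K > 0,
     d a(l) >= (1 - delta) K / (1 + K) (ln d + ln l + 1 - delta - ln K).
   As t |-> ln Z(e^t) is convex with derivative n a(e^t), integrating this bound from
   ln l ~ -ln d to ln delta yields ln Z(1) >= (1 - o(1)) n (ln d)^2 / (2 d); the integral is
   evaluated as a Riemann sum. *)

Section IndependentSetCount.

(* Stdlib's [exp] and [ln] read their argument in [R_scope]; within this section they read it in
   [ring_scope], and the final theorem, stated after it, keeps the usual reading. *)
#[local] Arguments exp _%_ring_scope.
#[local] Arguments ln _%_ring_scope.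

Lemma ler_eq (x y : R) : x = y -> x <= y.
Proof. by move->. Qed.

Lemma exp_gt0 (a : R) : 0 < exp a.
Proof. exact/RltP/exp_pos. Qed.

Lemma ler_exp (a b : R) : a <= b -> exp a <= exp b.
Proof.
rewrite le_eqVlt => /orP[/eqP -> // | /RltP ab].
exact/ltW/RltP/exp_increasing.
Qed.

Lemma ler_ln (x y : R) : 0 < x -> x <= y -> ln x <= ln y.
Proof.
move=> x0; rewrite le_eqVlt => /orP[/eqP -> // | /RltP xy].
exact/ltW/RltP/ln_increasing/xy/RltP.
Qed.

Lemma lnK (x : R) : 0 < x -> exp (ln x) = x.
Proof. by move=> /RltP; apply: exp_ln. Qed.

Lemma expN (x : R) : exp (- x) = (exp x)^-1.
Proof. exact: exp_Ropp. Qed.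

Lemma lnM (x y : R) : 0 < x -> 0 < y -> ln (x * y) = ln x + ln y.
Proof. by move=> /RltP x0 /RltP y0; apply: ln_mult. Qed.

Lemma lnV (x : R) : 0 < x -> ln x^-1 = - ln x.
Proof. by move=> /RltP; apply: ln_Rinv. Qed.

Lemma expR_ge1Dx (x : R) : 1 + x <= exp x.
Proof. exact/RleP/exp_ineq1_le. Qed.

Lemma exp_ge_tangent (a b : R) : exp b * (1 + (a - b)) <= exp a.
Proof.
have -> : exp a = exp b * exp (a - b) by rewrite expRD Rplus_minus.
by apply: ler_wpM2l; [exact/ltW/exp_gt0 | exact: expR_ge1Dx].
Qed.

Lemma ln_ge1Vx (x : R) : 0 < x -> 1 - x^-1 <= ln x.
Proof.
move=> x0; have := expR_ge1Dx (- ln x).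
by rewrite RoppE expN lnK //; lra.
Qed.

Lemma ln1D_le (l : R) : 0 <= l -> ln (1 + l) <= l.
Proof.
move=> l0; rewrite -[l in X in _ <= X]ln_exp ler_ln ?expR_ge1Dx //.
exact: ltr_pwDl ltr01 l0.
Qed.

Lemma ln1D_ge (l : R) : 0 <= l -> l / (1 + l) <= ln (1 + l).
Proof.
move=> l0; have l1 : 0 < 1 + l := ltr_pwDl ltr01 l0.
by apply: le_trans (ln_ge1Vx l1); apply: ler_eq; field; rewrite gt_eqF.
Qed.

Lemma ln1D_ge0 (l : R) : 0 <= l -> 0 <= ln (1 + l).
Proof. by move=> l0; rewrite -[0]ln_1 ler_ln // lerDl. Qed.

Lemma ler_sum_inj (I J : finType) (P : pred I) (Q : pred J) (f : I -> J) (g : J -> R) :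
  (forall j, Q j -> 0 <= g j) -> {in P &, injective f} -> (forall i, P i -> Q (f i)) ->
  \sum_(i | P i) g (f i) <= \sum_(j | Q j) g j.
Proof.
move=> g0 finj PQ.
rewrite -[\sum_(i | P i) _]/(\sum_(i in P) g (f i)) -(big_imset _ finj) /=.
rewrite [X in _ <= X](bigID (mem (f @: P))) /=.
have -> : \sum_(j | Q j && (j \in f @: P)) g j = \sum_(j in f @: P) g j.
  apply: eq_bigl => j /=; apply/idP/idP => [/andP[] // | fPj].
  by rewrite fPj andbT; case/imsetP: fPj => i Pi ->; apply: PQ.
by rewrite lerDl; apply: sumr_ge0 => j /andP[Qj _]; apply: g0.
Qed.

Lemma ler_sum_sub (I : finType) (P Q : pred I) (g : I -> R) :
  (forall j, Q j -> 0 <= g j) -> (forall i, P i -> Q i) ->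
  \sum_(i | P i) g i <= \sum_(j | Q j) g j.
Proof. by move=> g0 PQ; apply: (ler_sum_inj g0 (fun _ _ _ _ h => h)). Qed.

Lemma sum_subset_expr (T : finType) (l : R) (U : {set T}) :
  \sum_(A : {set T} | A \subset U) l ^+ #|A| = (1 + l) ^+ #|U|.
Proof.
rewrite -prodr_const [RHS]big_mkcond /=.
have -> : \prod_i (if i \in U then 1 + l else 1) = \prod_i ((if i \in U then l else 0) + 1).
  by apply: eq_bigr => i _; case: (i \in U); rewrite ?add0r // addrC.
rewrite bigA_distr [LHS]big_mkcond /=; apply: eq_bigr => J _.
rewrite -big_mkcond /=.
case: (boolP (J \subset U)) => [JU | /subsetPn[i iJ iU]].
  by rewrite -prodr_const; apply: eq_bigr => i /(subsetP JU) ->.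
by rewrite (bigD1 i) //= (negbTE iU) mul0r.
Qed.

Lemma exprVn_ge_tangent (x s : R) (n : nat) : 0 < x ->
  exp (- s) * (1 + s - n%:R * ln x) <= x^-1 ^+ n.
Proof.
move=> x0; rewrite -[x^-1]lnK ?invr_gt0 // lnV // expRX.
have -> : 1 + s - n%:R * ln x = 1 + ((- ln x) *+ n - - s) by rewrite -mulr_natl; ring.
exact: exp_ge_tangent.
Qed.

(* A Riemann sum for the slope bound [f t >= c (t - u)] on the derivative [f] of [ln F]. *)
Lemma exp_grid_growth (F f : R -> R) (u h c : R) (m : nat) :
  (forall t, 0 < F t) -> 0 <= h -> (forall t, F t * exp (h * f t) <= F (t + h)) ->
  (forall k, (k < m)%nat -> c * (k%:R * h) <= f (u + k%:R * h)) ->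
  F u * exp (c * h ^+ 2 * (m%:R * (m%:R - 1) / 2)) <= F (u + m%:R * h).
Proof.
move=> F_gt0 h0 step; elim: m => [|m IH] f_ge.
  by rewrite !mul0r mulr0 expR0 mulr1 addr0.
have IHm := IH (fun k km => f_ge k (ltnW km)).
have -> : u + m.+1%:R * h = u + m%:R * h + h by rewrite -[m.+1]addn1 natrD; ring.
apply: le_trans (step _); apply: le_trans (ler_pM _ _ IHm (ler_exp (ler_wpM2l h0 (f_ge m _)))).
- apply: ler_eq; rewrite -[_ * exp _ * exp _]mulrA expRD RplusE -[m.+1]addn1 natrD.
  by congr (_ * exp _); field.
- exact/mulr_ge0/ltW/exp_gt0/ltW/F_gt0.
- exact/ltW/exp_gt0.
- by [].
Qed.

Section HardCoreModel.
Variables (T : finType) (e : rel T).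

Definition uncovered (I : {set T}) (u : T) : bool := [forall w, e u w ==> (w \notin I)].

Definition indep_poly (l : R) : R := \sum_(I : {set T} | independent e I) l ^+ #|I|.

(* [indep_moment l = l Z'(l)], so [indep_moment l / (#|T| * indep_poly l)] is the occupancy
   fraction. *)
Definition indep_moment (l : R) : R :=
  \sum_(I : {set T} | independent e I) #|I|%:R * l ^+ #|I|.

Definition occupied_weight (v : T) (l : R) : R :=
  \sum_(I : {set T} | independent e I && (v \in I)) l ^+ #|I|.

Definition free_weight (v : T) (l : R) : R :=
  \sum_(I : {set T} | [&& independent e I, v \notin I & uncovered I v]) l ^+ #|I|.

Definition uncovered_nbrs (v : T) (I : {set T}) : nat := #|[set u | e v u && uncovered I u]|.

Lemma independentP (S : {set T}) :
  reflect (forall x y, x \in S -> y \in S -> ~~ e x y) (independent e S).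
Proof.
apply: (iffP forallP) => [H x y xS yS | H x].
  by move/(_ x): H; rewrite xS => /forallP/(_ y); rewrite yS.
by apply/implyP => xS; apply/forallP => y; apply/implyP; apply: H.
Qed.

Lemma uncoveredP (I : {set T}) (u : T) : reflect (forall w, e u w -> w \notin I) (uncovered I u).
Proof.
apply: (iffP forallP) => H w; first by move=> euw; move/(_ w): H; rewrite euw.
by apply/implyP; apply: H.
Qed.

Lemma num_indepE : (num_indep e)%:R = indep_poly 1.
Proof.
rewrite /num_indep /indep_poly -sumr_const.
by apply: eq_big => [I | I _]; rewrite ?inE ?expr1n.
Qed.

Lemma indep_poly_ge1 (l : R) : 0 <= l -> 1 <= indep_poly l.
Proof.
move=> l0; rewrite /indep_poly (bigD1 set0) /=; last by apply/independentP => x y; rewrite inE.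
by rewrite cards0 expr0 lerDl; apply: sumr_ge0 => I _; apply: exprn_ge0.
Qed.

Lemma indep_poly_gt0 (l : R) : 0 <= l -> 0 < indep_poly l.
Proof. by move=> l0; apply: lt_le_trans ltr01 (indep_poly_ge1 l0). Qed.

Lemma indep_moment_ge0 (l : R) : 0 <= l -> 0 <= indep_moment l.
Proof. by move=> l0; apply: sumr_ge0 => I _; rewrite mulr_ge0 ?exprn_ge0. Qed.

Lemma ler_indep_poly (l m : R) : 0 <= l -> l <= m -> indep_poly l <= indep_poly m.
Proof. by move=> l0 lm; apply: ler_sum => I _; rewrite lerXn2r // nnegrE (le_trans l0). Qed.

Lemma occupied_weight_ge0 (v : T) (l : R) : 0 <= l -> 0 <= occupied_weight v l.
Proof. by move=> l0; apply: sumr_ge0 => I _; apply: exprn_ge0. Qed.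

Lemma indep_moment_occupied (l : R) : indep_moment l = \sum_v occupied_weight v l.
Proof.
rewrite /indep_moment /occupied_weight.
under eq_bigr => I _ do rewrite mulr_natl -sumr_const.
by rewrite (exchange_big_dep (fun _ => true)).
Qed.

(* Convexity of [t |-> ln (indep_poly (exp t))], whose derivative is [indep_moment / indep_poly]. *)
Lemma indep_poly_exp_step (t h : R) :
  indep_poly (exp t) * exp (h * (indep_moment (exp t) / indep_poly (exp t)))
    <= indep_poly (exp (t + h)).
Proof.
set l := exp t; set Z := indep_poly l; set M := indep_moment l; set mu := M / Z.
set E := exp (h * mu).
have Z_neq0 : Z != 0 by rewrite gt_eqF ?indep_poly_gt0 ?ltW ?exp_gt0.
have tangent (I : {set T}) : l ^+ #|I| * (E * (1 + (h *+ #|I| - h * mu))) <= exp (t + h) ^+ #|I|.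
  rewrite -expRD exprMn [exp h ^+ _]expRX.
  by apply: ler_wpM2l; [apply: exprn_ge0; apply/ltW/exp_gt0 | apply: exp_ge_tangent].
apply: le_trans (ler_sum _ (fun I _ => tangent I)).
have -> : \sum_(I : {set T} | independent e I) l ^+ #|I| * (E * (1 + (h *+ #|I| - h * mu)))
    = E * (1 - h * mu) * Z + E * h * M.
  rewrite /Z /M /indep_poly /indep_moment !mulr_sumr -big_split /=.
  by apply: eq_bigr => I _; rewrite -mulr_natl; ring.
by apply: ler_eq; rewrite -[M](divfK Z_neq0) -/mu; ring.
Qed.

Lemma exp_le_num_indep (x : R) : x <= 0 -> exp x <= (num_indep e)%:R.
Proof.
move=> x_le0; rewrite num_indepE; apply: le_trans (indep_poly_ge1 ler01).
by rewrite -expR0 ler_exp.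
Qed.

Hypotheses (e_sym : forall x y, e x y = e y x) (e_irr : forall x, ~~ e x x).
Hypothesis e_tf : triangle_free e.

Lemma free_weight_le (v : T) (l : R) : 0 <= l -> l * free_weight v l <= occupied_weight v l.
Proof.
move=> l0; rewrite /free_weight /occupied_weight big_distrr /=.
rewrite (eq_bigr (fun I => l ^+ #|v |: I|)); last first.
  by move=> I /and3P[_ vI _]; rewrite cardsU1 vI exprS.
apply: (ler_sum_inj (fun I _ => exprn_ge0 _ l0)).
  move=> I J /and3P[_ vI _] /and3P[_ vJ _] /setP IJ; apply/setP => x.
  move: (IJ x); rewrite !in_setU1; case: eqVneq => [-> | //] _.
  by rewrite (negbTE vI) (negbTE vJ).
move=> I /and3P[/independentP iI vI /uncoveredP uI]; rewrite setU11 andbT.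
apply/independentP => x y; rewrite !in_setU1 => /predU1P[-> | xI] /predU1P[-> | yI].
- exact: e_irr.
- by apply/negP => /uI; rewrite yI.
- by rewrite e_sym; apply/negP => /uI; rewrite xI.
- exact: iI.
Qed.

Lemma uncovered_nbrs_setD (v : T) (I : {set T}) :
  uncovered_nbrs v I = uncovered_nbrs v (I :\: [set u | e v u]).
Proof.
apply: eq_card => u; rewrite !inE; case evu: (e v u) => //=.
apply/uncoveredP/uncoveredP => H w euw; first by rewrite inE negb_and H ?orbT.
have evw : e v w = false by apply/negP => evw; apply: (@e_tf v u w); rewrite evu euw evw.
by have := H w euw; rewrite !inE evw.
Qed.

(* Group the sets [I] by [O = I :\: N(v)]: since [G] has no triangles, [I] and [O] have the same
   uncovered neighbours of [v], and [I :&: N(v)] ranges over subsets of them. *)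
Lemma sum_inv_pow_uncovered_free_le (v : T) (l : R) : 0 <= l ->
  \sum_(I : {set T} | independent e I && (v \notin I))
     l ^+ #|I| * (1 + l)^-1 ^+ uncovered_nbrs v I <= free_weight v l.
Proof.
move=> l0; set N := [set u | e v u].
rewrite /free_weight (partition_big (fun I : {set T} => I :\: N)
   (fun O : {set T} => [&& independent e O, v \notin O & uncovered O v])) /=; last first.
  move=> I /andP[/independentP iI vI]; apply/and3P; split.
  - by apply/independentP => x y /setDP[xI _] /setDP[yI _]; apply: iI.
  - by rewrite inE negb_and vI orbT.
  - by apply/uncoveredP => w evw; rewrite !inE evw.
apply: ler_sum => O _.
set U := [set u | e v u && uncovered O u].
have lp : 0 < 1 + l by rewrite ltr_pwDl.
have split_weight I : (independent e I && (v \notin I)) && (I :\: N == O) ->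
    l ^+ #|I| * (1 + l)^-1 ^+ uncovered_nbrs v I
  = l ^+ #|O| * (1 + l)^-1 ^+ #|U| * l ^+ #|I :&: N|.
  move=> /andP[_ /eqP IO].
  by rewrite uncovered_nbrs_setD IO -(cardsID N I) IO exprD -mulrA mulrC.
rewrite (eq_bigr _ split_weight) -big_distrr /=.
have sum_nbr_part : \sum_(I : {set T} | (independent e I && (v \notin I)) && (I :\: N == O))
    l ^+ #|I :&: N| <= (1 + l) ^+ #|U|.
  rewrite -sum_subset_expr; apply: (ler_sum_inj (fun A _ => exprn_ge0 _ l0)).
    move=> I J /andP[_ /eqP IO] /andP[_ /eqP JO] INJN.
    by rewrite -(setID I N) -(setID J N) INJN IO JO.
  move=> I /andP[/andP[/independentP iI _] /eqP IO]; apply/subsetP => u.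
  rewrite !inE => /andP[uI evu]; rewrite evu; apply/uncoveredP => w euw.
  by rewrite -IO !inE negb_and; apply/orP; right; apply/negP => wI; move: (iI u w uI wI); rewrite euw.
apply: le_trans (ler_wpM2l _ sum_nbr_part) _.
  by rewrite mulr_ge0 ?exprn_ge0 // invr_ge0 ltW.
by rewrite -mulrA -exprMn mulVf ?expr1n ?mulr1 // gt_eqF.
Qed.

Lemma sum_inv_pow_uncovered_le (v : T) (l : R) : 0 <= l ->
  \sum_(I : {set T} | independent e I) l ^+ #|I| * (1 + l)^-1 ^+ uncovered_nbrs v I
    <= occupied_weight v l + free_weight v l.
Proof.
move=> l0; rewrite (bigID (fun I : {set T} => v \in I)) /=.
apply: lerD; last exact: sum_inv_pow_uncovered_free_le.
apply: ler_sum => I _; rewrite -[X in _ <= X]mulr1 ler_wpM2l ?exprn_ge0 //.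
have lp : 0 < 1 + l by rewrite ltr_pwDl.
by apply: exprn_ile1; [rewrite invr_ge0 ltW | rewrite invf_le1 // lerDl].
Qed.

Lemma sum_uncovered_nbrs_le (v : T) (l : R) : 0 <= l ->
  \sum_(I : {set T} | independent e I) l ^+ #|I| * (uncovered_nbrs v I)%:R
    <= \sum_(u | e v u) (occupied_weight u l + free_weight u l).
Proof.
move=> l0.
under eq_bigr => I _ do rewrite mulr_natr -sumr_const.
rewrite (exchange_big_dep (e v)) /=; last by move=> I u _; rewrite inE => /andP[].
apply: ler_sum => u evu; rewrite (bigID (fun I : {set T} => u \in I)) /=.
apply: lerD; apply: ler_sum_sub => [I _ | I]; rewrite ?exprn_ge0 //.
  by rewrite inE => /andP[/andP[-> _] ->].
by rewrite inE => /andP[/andP[-> /andP[_ ->]] ->].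
Qed.

Variable d : nat.
Hypothesis deg_le : forall v, (deg e v <= d)%nat.

Lemma sum_nbrs_le (F : T -> R) : (forall u, 0 <= F u) ->
  \sum_v \sum_(u | e v u) F u <= d%:R * \sum_u F u.
Proof.
move=> F0; rewrite (exchange_big_dep xpredT) //= big_distrr /=.
apply: ler_sum => u _.
have -> : \sum_(v | true && e v u) F u = F u *+ deg e u.
  by rewrite -sumr_const; apply: eq_bigl => v; rewrite inE e_sym.
by rewrite mulr_natl; apply: ler_wpMn2l.
Qed.

(* Each vertex sees [(1 + l)^-Y] bounded below by the tangent of [exp] at [- s], [Y] being the
   number of its uncovered neighbours. *)
Lemma occupancy_tangent_bound (l s : R) : 0 < l ->
  exp (- s) * (1 + s) * #|T|%:R * indep_poly l
    <= (1 + l^-1) * indep_moment l * (1 + exp (- s) * ln (1 + l) * d%:R).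
Proof.
move=> l_gt0; have l0 := ltW l_gt0.
set E := exp (- s); set L := ln (1 + l); set c := 1 + l^-1.
have E0 : 0 <= E := ltW (exp_gt0 _).
have L0 : 0 <= L := ln1D_ge0 l0.
have c0 : 0 <= c by rewrite addr_ge0 ?invr_ge0.
have weight_le u : occupied_weight u l + free_weight u l <= c * occupied_weight u l.
  rewrite mulrDl mul1r lerD2l -[free_weight u l](mulKf (lt0r_neq0 l_gt0)).
  by rewrite ler_wpM2l ?invr_ge0 // free_weight_le.
pose B v := \sum_(I : {set T} | independent e I) l ^+ #|I| * (uncovered_nbrs v I)%:R.
have sumB : \sum_v B v <= c * (d%:R * indep_moment l).
  apply: (@le_trans _ _ (\sum_v \sum_(u | e v u) c * occupied_weight u l)).
    apply: ler_sum => v _; apply: le_trans (sum_uncovered_nbrs_le v l0) _.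
    by apply: ler_sum => u _; apply: weight_le.
  rewrite mulrCA indep_moment_occupied big_distrr /=.
  by apply: sum_nbrs_le => u; rewrite mulr_ge0 ?occupied_weight_ge0.
have tangent v : E * ((1 + s) * indep_poly l - L * B v) <= c * occupied_weight v l.
  apply: le_trans (weight_le v); apply: le_trans (sum_inv_pow_uncovered_le v l0).
  rewrite /indep_poly /B mulrBr !mulr_sumr -sumrB; apply: ler_sum => I _.
  have := exprVn_ge_tangent s (uncovered_nbrs v I) (ltr_pwDl ltr01 l0).
  move=> /(ler_wpM2l (exprn_ge0 #|I| l0)); apply: le_trans.
  by apply: ler_eq; rewrite -/E -/L; ring.
have sum_tangent : E * ((1 + s) * indep_poly l *+ #|T| - L * \sum_v B v) <= c * indep_moment l.
  rewrite indep_moment_occupied [c * _]mulr_sumr.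
  apply: (le_trans _ (ler_sum _ (fun v _ => tangent v))).
  by rewrite -mulr_sumr sumrB -!mulr_sumr -sumr_const -mulr_sumr.
have := ler_wpM2l (mulr_ge0 E0 L0) sumB.
move: sum_tangent; rewrite -mulr_natr; lra.
Qed.

Lemma occupancy_lower (K delta t : R) : (0 < d)%nat -> 0 < K -> 0 < delta -> delta <= 1 ->
  t <= ln delta ->
  #|T|%:R * ((1 - delta) * (K / (1 + K))) * (1 + ln d%:R + t - delta - ln K)
    * indep_poly (exp t) <= d%:R * indep_moment (exp t).
Proof.
move=> d_gt0 K0 delta0 delta1 t_le.
set l := exp t; set L := ln (1 + l); set n := #|T|%:R; set G := 1 + ln d%:R + t - delta - ln K.
set Z := indep_poly l; set M := indep_moment l.
have l0 : 0 < l := exp_gt0 t.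
have l1 : 0 < 1 + l := ltr_pwDl ltr01 (ltW l0).
have l_le : l <= delta by rewrite -(lnK delta0) ler_exp.
have L_le : L <= l := ln1D_le (ltW l0).
have L0 : 0 < L by apply: lt_le_trans (ln1D_ge (ltW l0)); rewrite divr_gt0.
have d0 : 0 < d%:R :> R by rewrite ltr0n.
have K1 : 0 < 1 + K := ltr_pwDl ltr01 (ltW K0).
have Z0 : 0 <= Z := ltW (indep_poly_gt0 (ltW l0)).
have M0 : 0 <= M := indep_moment_ge0 (ltW l0).
set s := ln (d%:R * L / K).
have Es : exp (- s) * L * d%:R = K.
  by rewrite expN lnK ?divr_gt0 ?mulr_gt0 // invf_div; field; rewrite !gt_eqF.
have G_le : G <= 1 + s.
  have := ler_ln (divr_gt0 l0 l1) (ln1D_ge (ltW l0)).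
  by rewrite /G /s !lnM ?invr_gt0 ?mulr_gt0 // !lnV // ln_exp -/L; lra.
have tangent : K * (1 + s) * n * Z <= (1 + l) * (1 + K) * (d%:R * M).
  have := ler_wpM2l (ltW (mulr_gt0 L0 d0)) (occupancy_tangent_bound s l0).
  rewrite -/L -/Z -/M -/n Es (_ : L * d%:R * _ = K * (1 + s) * n * Z); last by rewrite -Es; ring.
  move/le_trans; apply.
  have cL_le : (1 + l^-1) * L <= 1 + l.
    rewrite mulrDl mul1r [1 + l]addrC; apply: lerD => //.
    by rewrite mulrC ler_pdivrMr // mul1r.
  by have := ler_wpM2r (mulr_ge0 (ltW K1) (mulr_ge0 (ltW d0) M0)) cL_le; lra.
have shrink : (1 - delta) * (1 + l) <= 1 by nra.
rewrite -(ler_pM2r K1).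
have -> : n * ((1 - delta) * (K / (1 + K))) * G * Z * (1 + K) = (1 - delta) * K * n * Z * G.
  by field; rewrite gt_eqF.
have delta1' : 0 <= 1 - delta by rewrite subr_ge0.
have nZ0 : 0 <= (1 - delta) * K * n * Z.
  by rewrite mulr_ge0 // mulr_ge0 ?ler0n // mulr_ge0 // ltW.
have := ler_wpM2l nZ0 G_le; have := ler_wpM2l delta1' tangent.
by have := ler_wpM2r (mulr_ge0 (ltW K1) (mulr_ge0 (ltW d0) M0)) shrink; lra.
Qed.

Lemma indep_poly_lower (K delta u h : R) (m : nat) :
  (0 < d)%nat -> 0 < K -> 0 < delta -> delta <= 1 -> 0 <= h ->
  1 + ln d%:R + u - delta - ln K = 0 -> u + m%:R * h = ln delta ->
  exp (#|T|%:R * ((1 - delta) * (K / (1 + K))) / d%:R * h ^+ 2 * (m%:R * (m%:R - 1) / 2))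
    <= indep_poly delta.
Proof.
move=> d_gt0 K0 delta0 delta1 h0 u_start u_end.
have d0 : 0 < d%:R :> R by rewrite ltr0n.
set c := #|T|%:R * ((1 - delta) * (K / (1 + K))) / d%:R.
have slope k : (k < m)%nat ->
    c * (k%:R * h) <= indep_moment (exp (u + k%:R * h)) / indep_poly (exp (u + k%:R * h)).
  move=> km; have Z0 := indep_poly_gt0 (ltW (exp_gt0 (u + k%:R * h))).
  have t_le : u + k%:R * h <= ln delta.
    by rewrite -u_end lerD2l ler_wpM2r // ler_nat ltnW.
  have := occupancy_lower d_gt0 K0 delta0 delta1 t_le.
  have -> : 1 + ln d%:R + (u + k%:R * h) - delta - ln K = k%:R * h by move: u_start; lra.
  rewrite ler_pdivlMr // => H; rewrite -(ler_pM2l d0); apply: (le_trans _ H).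
  apply: ler_eq; rewrite /c; field.
  by rewrite (gt_eqF d0) gt_eqF // ltr_pwDl // ltW.
have := exp_grid_growth (fun t => indep_poly_gt0 (ltW (exp_gt0 t))) h0
  (fun t => indep_poly_exp_step t h) slope.
rewrite u_end lnK // => /(le_trans _); apply.
by rewrite ler_peMl ?indep_poly_ge1 ?ltW ?exp_gt0.
Qed.

End HardCoreModel.

Lemma natr_unbounded (x : R) : exists n : nat, x < n%:R.
Proof. by have [n /RltP] := INR_unbounded x; rewrite INRE; exists n. Qed.

Lemma occupancy_factor_ge (eps : R) (m : nat) : 0 < eps -> eps < 1 / 2 -> 4 / eps < m%:R ->
  1 - eps <= (1 - eps / 4) * ((4 / eps) / (1 + 4 / eps)) * (1 - m%:R^-1).
Proof.
move=> eps0 eps_lt m_gt.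
have m0 : 0 < m%:R :> R by apply: lt_trans m_gt; rewrite divr_gt0.
have K_ge : 1 - eps / 4 <= (4 / eps) / (1 + 4 / eps).
  have -> : (4 / eps) / (1 + 4 / eps) = 4 / (eps + 4) by field; rewrite !gt_eqF // addr_gt0.
  by rewrite ler_pdivlMr ?addr_gt0 //; nra.
have m_ge : 1 - eps / 4 <= 1 - m%:R^-1.
  by rewrite lerD2l lerN2 -invf_div lef_pV2 ?posrE ?divr_gt0 // ltW.
have e1 : 0 <= 1 - eps / 4 by lra.
apply: le_trans (ler_pM (mulr_ge0 e1 e1) e1 (ler_wpM2l e1 K_ge) m_ge).
have e2 : 0 <= eps / 4 by lra.
nra.
Qed.

Lemma square_margin (eps a X y : R) : 0 < eps -> eps < 1 / 2 -> 1 - eps <= a ->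
  0 <= y -> (1 - eps / 2) * y <= X -> (1 - 2 * eps) * y ^+ 2 <= a * X ^+ 2.
Proof.
move=> eps0 eps_lt a_ge y0 X_ge.
have p0 : 0 <= (1 - eps / 2) * y by rewrite mulr_ge0 //; lra.
have X2 : ((1 - eps / 2) * y) ^+ 2 <= X ^+ 2 by rewrite lerXn2r // nnegrE (le_trans p0).
have := ler_wpM2r (sqr_ge0 X) a_ge; nra.
Qed.

(* With [delta = eps / 4] and [K = 4 / eps] the slope factor [(1 - delta) K / (1 + K)] is nearly 1;
   [ln l] runs in [m] steps from [ln K + delta - 1 - ln d], where the occupancy bound becomes
   positive, to [ln delta]. *)
Lemma indep_count_lower_lt_half (eps : R) : 0 < eps -> eps < 1 / 2 ->
  exists d0 : nat, forall (d : nat) (T : finType) (e : rel T), (d0 <= d)%nat ->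
    simple_graph e -> triangle_free e -> (forall v, (deg e v <= d)%nat) ->
    exp ((1 / 2 - eps) * (ln d%:R ^+ 2 / d%:R) * #|T|%:R) <= (num_indep e)%:R.
Proof.
move=> eps0 eps_lt.
set delta := eps / 4; set K := 4 / eps; set C := ln K - ln delta + delta - 1.
have delta0 : 0 < delta by rewrite divr_gt0.
have K0 : 0 < K by rewrite divr_gt0.
have [m m_gt] := natr_unbounded K.
have m0 : 0 < m%:R :> R by apply: lt_trans m_gt.
set B := 2 * C / eps.
have [d0 d0_gt] := natr_unbounded (exp B).
exists d0.+1 => d T e d_ge [e_sym e_irr] e_tf deg_le.
have d_gt0 : (0 < d)%nat by apply: leq_trans d_ge.
have d_pos : 0 < d%:R :> R by rewrite ltr0n.
set ld := ln d%:R.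
have ld_ge : B <= ld.
  rewrite -[X in X <= _]ln_exp ler_ln ?exp_gt0 //.
  by apply/ltW/(lt_le_trans d0_gt); rewrite ler_nat ltnW.
have ld0 : 0 <= ld by rewrite -[0]ln_1 ler_ln // ler1n.
have C_le : 2 * C <= eps * ld by move: ld_ge; rewrite /B ler_pdivrMr // [ld * _]mulrC.
have X_ge : (1 - eps / 2) * ld <= ld - C by lra.
have X0 : 0 <= ld - C by apply: le_trans X_ge; rewrite mulr_ge0 //; lra.
set h := (ld - C) / m%:R; set u := ln K + delta - 1 - ld.
have h0 : 0 <= h := divr_ge0 X0 (ltW m0).
have delta1 : delta <= 1 by rewrite /delta ler_pdivrMr //; lra.
have u_start : 1 + ld + u - delta - ln K = 0 by rewrite /u; ring.
have u_end : u + m%:R * h = ln delta by rewrite /h /u /C; field; rewrite gt_eqF.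
have grid := indep_poly_lower e_sym e_irr e_tf deg_le d_gt0 K0 delta0 delta1 h0 u_start u_end.
rewrite num_indepE; apply: le_trans (le_trans grid (ler_indep_poly _ (ltW delta0) delta1)).
apply: ler_exp; set n := #|T|%:R; set a := (1 - delta) * (K / (1 + K)).
have margin := square_margin eps0 eps_lt (occupancy_factor_ge eps0 eps_lt m_gt) ld0 X_ge.
have -> : (1 / 2 - eps) * (ld ^+ 2 / d%:R) * n = n / d%:R / 2 * ((1 - 2 * eps) * ld ^+ 2).
  by field; rewrite gt_eqF.
have -> : n * a / d%:R * h ^+ 2 * (m%:R * (m%:R - 1) / 2)
    = n / d%:R / 2 * (a * (1 - m%:R^-1) * (ld - C) ^+ 2).
  by rewrite /h; field; rewrite !gt_eqF.
by rewrite ler_wpM2l // !divr_ge0 ?ler0n.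
Qed.

Lemma indep_count_lower (eps : R) : 0 < eps ->
  exists d0 : nat, forall (d : nat) (T : finType) (e : rel T), (d0 <= d)%nat ->
    simple_graph e -> triangle_free e -> (forall v, (deg e v <= d)%nat) ->
    exp ((1 / 2 - eps) * (ln d%:R ^+ 2 / d%:R) * #|T|%:R) <= (num_indep e)%:R.
Proof.
move=> eps0; have [eps_lt | eps_ge] := ltP eps (1 / 2).
  exact: indep_count_lower_lt_half.
exists 0%nat => d T e _ _ _ _; apply: exp_le_num_indep.
by rewrite mulr_le0_ge0 ?ler0n // mulr_le0_ge0 ?subr_le0 // divr_ge0 ?sqr_ge0 ?ler0n.
Qed.

End IndependentSetCount.

Local Close Scope ring_scope.

Theorem theorem1p2 :
  forall eps : R, (0 < eps)%R ->
  exists d0 : nat,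
    forall (d : nat) (T : finType) (e : rel T),
      (d0 <= d)%N ->
      simple_graph e -> triangle_free e -> max_degree_eq e d ->
      (exp ((1/2 - eps) * ((ln (INR d))^2 / INR d) * INR #|T|)
         <= INR (num_indep e))%R.
Proof.
move=> eps /RltP /indep_count_lower [d0 d0_ok].
exists d0 => d T e d_ge e_simple e_tf [deg_le _].
by rewrite !INRE RpowE; apply/RleP; apply: d0_ok.
Qed.
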